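(* Assume the Lang–Waldschmidt conjecture: for every $\epsilon>0$ there is $C(\epsilon)>0$ such that for all positive integers $a_1,\dots,a_n$ and nonzero integers $b_1,\dots,b_n$ with $a_1^{b_1}\cdots a_n^{b_n}\neq1$, $$ \left|a_1^{b_1}\cdots a_n^{b_n}-1\right|\ge\frac{C(\epsilon)\max_j|b_j|}{|b_1\cdots b_na_1\cdots a_n|^{1+\epsilon}}. $$ Let $\epsilon>0$. Then there is a constant $C'_\epsilon$ such that for all $x\in\mathbb{P}^1(\mathbb{Q})\setminus\{0,1,\infty\}$, $$ \lambda_{\mathbb{P}^1,\infty}(1,x)<(1+\epsilon)N^{(1)}_{\mathbb{P}^1}([0]+[\infty],x)+\epsilon\, h(x)+C'_\epsilon. $$
   Context: For $x=b/c\in\mathbb{Q}$ with $b,c$ coprime integers, $h(x)=\log\max\{|b|,|c|\}$. $\lambda_{\mathbb{P}^1,\infty}(1,x)=\log^+(|1-x|^{-1})$ up to a bounded function, where $\log^+t=\log\max\{1,t\}$. Up to a bounded function, $N^{(1)}_{\mathbb{P}^1}([0]+[\infty],x)=\log\mathrm{rad}(bc)$, where $\mathrm{rad}(m)$ is the product of the distinct primes dividing $m$ (this is the truncated counting function $\sum_p\min\{\lambda_{\mathbb{P}^1,p}([0]+[\infty],x),\log p\}$). *)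

From Stdlib Require Import Reals ZArith.
From mathcomp Require Import ssreflect ssrbool ssrnat seq prime bigop.

Definition rad (m : nat) : nat := (\prod_(p <- primes m) p)%N.

Open Scope R_scope.

Fixpoint prodR (n : nat) (f : nat -> R) : R :=
  match n with O => 1 | S k => prodR k f * f k end.

Fixpoint maxR (n : nat) (f : nat -> R) : R :=
  match n with O => 0 | S k => Rmax (maxR k f) (f k) end.

Definition logplus (t : R) : R := ln (Rmax 1 t).

Definition LangWaldschmidt : Prop :=
  forall eps : R, 0 < eps -> exists C : R, 0 < C /\
    forall (n : nat) (a : nat -> nat) (b : nat -> Z),
      (forall j, (j < n)%coq_nat -> (0 < a j)%coq_nat) ->
      (forall j, (j < n)%coq_nat -> b j <> 0%Z) ->
      prodR n (fun j => powerRZ (INR (a j)) (b j)) <> 1 ->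
      Rabs (prodR n (fun j => powerRZ (INR (a j)) (b j)) - 1) >=
        C * maxR n (fun j => IZR (Z.abs (b j))) /
        Rpower (Rabs (prodR n (fun j => IZR (b j)) * prodR n (fun j => INR (a j))))
               (1 + eps).

(* h(b/c) = log max{|b|,|c|} *)
Definition height (b c : Z) : R := ln (IZR (Z.max (Z.abs b) (Z.abs c))).
(* lambda_{P^1,infty}(1, b/c) = log^+ (|1 - b/c|^{-1}) *)
Definition lambda1 (b c : Z) : R := logplus (/ Rabs (1 - IZR b / IZR c)).
(* N^{(1)}([0]+[infty], b/c) = log rad(bc) *)
Definition N1 (b c : Z) : R := ln (INR (rad (Z.abs_nat (b * c)))).

From Stdlib Require Import Reals ZArith Lia Lra.
From mathcomp Require Import all_boot zify.

(* Write x = b/c in lowest terms.  When |1 - x| >= 1, which covers every negative x,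
   lambda vanishes.  Otherwise x > 0 and x = prod_(p | bc) p^(v_p(b) - v_p(c)); as b and
   c are coprime every exponent is nonzero, of absolute value v_p(bc).  Lang-Waldschmidt
   for this product gives |x - 1| >= K / (Q rad(bc))^(1+eps) with Q = prod_(p | bc) v_p(bc),
   hence lambda <= (1+eps) (log Q + N) - log K.  Finally Q = |bc|^o(1): for every k,
   Q^k <= (k^k)^(2^k) |bc|, because v^k <= p^v as soon as p >= 2^k, while each of the
   fewer than 2^k smaller primes costs at most a factor k^k.  With k > 2(1+eps)/eps and
   log |bc| <= 2h this gives (1+eps) log Q <= (1+eps) log ((k^k)^(2^k)) + eps h. *)

Open Scope nat_scope.

Lemma expn_le_kk_exp2 e k : 0 < k -> e ^ k <= k ^ k * 2 ^ e.
Proof.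
move=> k_gt0; set q := e %/ k.
have e_le : e <= k * 2 ^ q.
  apply: (leq_trans (ltnW (ltn_ceil e k_gt0))); rewrite mulnC leq_mul //.
  exact: ltn_expl.
apply: (@leq_trans ((k * 2 ^ q) ^ k)); first by rewrite leq_exp2r.
rewrite expnMn -expnM leq_mul // leq_pexp2l //; exact: leq_divM.
Qed.

Lemma expn_le_prime_pow k p e : 0 < k -> prime p ->
  e ^ k <= (if p < 2 ^ k then k ^ k else 1) * p ^ e.
Proof.
move=> k_gt0 p_pr; have p_gt1 := prime_gt1 p_pr.
case: e => [|e]; first by rewrite exp0n.
case: ltnP => [_ | p_ge].
  apply: (leq_trans (expn_le_kk_exp2 e.+1 _ k_gt0)).
  by rewrite leq_mul // leq_exp2r.
rewrite mul1n; apply: (@leq_trans ((2 ^ e.+1) ^ k)).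
  by rewrite leq_exp2r //; apply/ltnW/ltn_expl.
by rewrite -expnM mulnC expnM leq_exp2r.
Qed.

Lemma count_small_primes n m : count (fun p => p < n) (primes m) <= n.
Proof.
rewrite -size_filter -[n in _ <= n](size_iota 0); apply: uniq_leq_size.
  exact/filter_uniq/primes_uniq.
by move=> p; rewrite mem_filter mem_iota add0n => /andP[].
Qed.

Lemma prod_primes_logn {d s} : 0 < d -> uniq s -> {subset primes d <= s} ->
  \prod_(p <- s) p ^ logn p d = d.
Proof.
move=> d_gt0 s_uniq d_s.
rewrite (bigID (mem (primes d))) /= [X in _ * X]big1 ?muln1; last first.
  by move=> p; rewrite -logn_gt0 lt0n negbK => /eqP->.
rewrite -big_filter [RHS]prod_prime_decomp // prime_decompE big_map /=.
apply: perm_big; apply: uniq_perm; first exact: filter_uniq.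
  exact: primes_uniq.
by move=> p; rewrite mem_filter andb_idr //; apply: d_s.
Qed.

Definition prod_logn (m : nat) : nat := \prod_(p <- primes m) logn p m.

Lemma prod_logn_gt0 m : 0 < prod_logn m.
Proof. by rewrite /prod_logn big_seq prodn_cond_gt0 // => p; rewrite logn_gt0. Qed.

Lemma prod_logn_exp_le k m : 0 < k -> 0 < m ->
  prod_logn m ^ k <= (k ^ k) ^ (2 ^ k) * m.
Proof.
move=> k_gt0 m_gt0.
rewrite /prod_logn (big_morph (fun x => x ^ k) (fun a b => expnMn a b k) (exp1n k)).
apply: (@leq_trans (\prod_(p <- primes m)
                       ((if p < 2 ^ k then k ^ k else 1) * p ^ logn p m))).
  rewrite big_seq [X in _ <= X]big_seq; apply: leq_prod => p.
  by rewrite mem_primes => /andP[p_pr _]; apply: expn_le_prime_pow.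
rewrite big_split /= (prod_primes_logn m_gt0 (primes_uniq m) (fun _ => id)).
rewrite leq_mul // -big_mkcond /= big_const_seq iter_muln_1.
by rewrite leq_pexp2l ?expn_gt0 ?k_gt0 // count_small_primes.
Qed.

Lemma rad_gt0 m : 0 < rad m.
Proof.
by rewrite /rad big_seq prodn_cond_gt0 // => p; rewrite mem_primes => /andP[/prime_gt0].
Qed.

Lemma nth_primes_gt0 {m j} : j < size (primes m) -> 0 < nth 0 (primes m) j.
Proof. by move/(mem_nth 0%N); rewrite mem_primes => /andP[/prime_gt0]. Qed.

Definition prime_exponent (B C p : nat) : Z :=
  (Z.of_nat (logn p B) - Z.of_nat (logn p C))%Z.

Lemma abs_prime_exponent {B C} p : 0 < B -> 0 < C -> coprime B C ->
  Z.abs_nat (prime_exponent B C p) = logn p (B * C).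
Proof.
move=> B_gt0 C_gt0 coBC; rewrite /prime_exponent lognM //.
have [pB | pB] := boolP (p \in primes B).
  have /eqP : logn p C == 0.
    rewrite -leqn0 leqNgt logn_gt0; apply: contraL pB => pC.
    by move: coBC; rewrite coprime_has_primes // => /hasPn; apply.
  lia.
have /eqP : logn p B == 0 by rewrite -leqn0 leqNgt logn_gt0.
lia.
Qed.

Lemma dvdn_abs_nat_Zdivide d b : d %| Z.abs_nat b -> (Z.of_nat d | b)%Z.
Proof.
case/dvdnP=> k b_eq; apply/Z.divide_abs_r.
by rewrite -Zabs2Nat.id_abs b_eq; exists (Z.of_nat k); lia.
Qed.

Lemma coprime_abs_nat {b c} : Z.gcd b c = 1%Z -> coprime (Z.abs_nat b) (Z.abs_nat c).
Proof.
move=> g1; have : (Z.of_nat (gcdn (Z.abs_nat b) (Z.abs_nat c)) | 1)%Z.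
  by rewrite -g1; apply: Z.gcd_greatest; apply: dvdn_abs_nat_Zdivide;
    [exact: dvdn_gcdl | exact: dvdn_gcdr].
move/Z.divide_1_r_nonneg => /(_ (Zle_0_nat _)); rewrite /coprime; lia.
Qed.

Open Scope R_scope.

Lemma ln_le x y : 0 < x -> x <= y -> ln x <= ln y.
Proof.
move=> x_gt0 [xy | <-]; last exact: Rle_refl.
exact/Rlt_le/ln_increasing.
Qed.

Lemma INR_gt0 {n} : (0 < n)%N -> 0 < INR n.
Proof. by move/ltP/lt_0_INR. Qed.

Lemma ln_INR_ge0 {n} : (0 < n)%N -> 0 <= ln (INR n).
Proof. by move=> n_gt0; rewrite -ln_1; apply: ln_le; [lra | apply/(le_INR 1)/leP]. Qed.

Lemma ln_INR_mul {m n} : (0 < m)%N -> (0 < n)%N ->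
  ln (INR (m * n)) = ln (INR m) + ln (INR n).
Proof. by move=> m_gt0 n_gt0; rewrite -multE mult_INR ln_mult; [|exact: INR_gt0..]. Qed.

Lemma neg_ln_div_Rpower K y p : 0 < K -> - ln (K / Rpower y p) = p * ln y - ln K.
Proof.
move=> K_gt0; have Ry_gt0 : 0 < Rpower y p by apply: exp_pos.
rewrite /Rdiv ln_mult ?ln_Rinv ?ln_Rpower //; [ring | exact: Rinv_0_lt_compat].
Qed.

Lemma INR_expn m n : INR (m ^ n)%N = INR m ^ n.
Proof. by elim: n => [|n IH] //=; rewrite expnS mult_INR IH. Qed.

Lemma INR_abs_nat z : INR (Z.abs_nat z) = Rabs (IZR z).
Proof. by rewrite INR_IZR_INZ Zabs2Nat.id_abs Rabs_Zabs. Qed.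

Lemma INR_abs_nat_gt0 z : z <> 0%Z -> 0 < INR (Z.abs_nat z).
Proof. by rewrite INR_abs_nat => /not_0_IZR/Rabs_pos_lt. Qed.

Lemma powerRZ_sub_of_nat x (a b : nat) : x <> 0 ->
  powerRZ x (Z.of_nat a - Z.of_nat b) = x ^ a / x ^ b.
Proof.
by move=> x_neq0; rewrite /Z.sub powerRZ_add // powerRZ_neg' -!pow_powerRZ.
Qed.

Lemma prodR_ext N f g : (forall j, (j < N)%N -> f j = g j) -> prodR N f = prodR N g.
Proof.
elim: N => [|N IH] fg //=.
by rewrite IH ?fg // => j j_lt; apply: fg; apply: ltnW.
Qed.

Lemma prodR_div N f g : prodR N (fun j => f j / g j) = prodR N f / prodR N g.
Proof.
elim: N => [|N IH] /=; first by field.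
by rewrite IH /Rdiv Rinv_mult; ring.
Qed.

Lemma prodR_abs N f : Rabs (prodR N f) = prodR N (fun j => Rabs (f j)).
Proof.
elim: N => [|N IH] /=; first exact: Rabs_R1.
by rewrite Rabs_mult IH.
Qed.

Lemma prodR_INR N (f : nat -> nat) :
  prodR N (fun j => INR (f j)) = INR (\prod_(0 <= j < N) f j)%N.
Proof.
elim: N => [|N IH] /=; first by rewrite big_mkord big_ord0.
by rewrite big_nat_recr //= IH -mult_INR.
Qed.

Lemma prodR_nth_INR s (F : nat -> nat) :
  prodR (size s) (fun j => INR (F (nth 0%N s j))) = INR (\prod_(p <- s) F p)%N.
Proof. by rewrite (prodR_INR _ (fun j => F (nth 0%N s j))) [in RHS](big_nth 0%N). Qed.

Lemma le_maxR N f j : (j < N)%N -> f j <= maxR N f.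
Proof.
elim: N => [|N IH] //= j_lt.
have [j_eq | j_ne] := eqVneq j N; first by rewrite j_eq; apply: Rmax_r.
apply: Rle_trans (Rmax_l _ _); apply: IH; rewrite ltn_neqAle j_ne -ltnS //.
Qed.

Lemma logplus_inv_ge1 t : 1 <= t -> logplus (/ t) = 0.
Proof.
move=> t_ge1; rewrite /logplus Rmax_left ?ln_1 //.
by rewrite -Rinv_1; apply: Rinv_le_contravar; lra.
Qed.

Lemma logplus_inv_le L t : 0 < L -> L <= t -> t < 1 -> logplus (/ t) <= - ln L.
Proof.
move=> L_gt0 L_le t_lt1; rewrite /logplus Rmax_right -?ln_Rinv //.
  by apply: ln_le; [apply: Rinv_0_lt_compat | apply: Rinv_le_contravar]; lra.
by rewrite -Rinv_1; apply: Rinv_le_contravar; lra.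
Qed.

Section PrimeFactorisation.

Context {B C : nat}.
Hypotheses (B_gt0 : (0 < B)%N) (C_gt0 : (0 < C)%N) (coBC : coprime B C).

Let s := primes (B * C).
Let a := nth 0%N s.
Let e j := prime_exponent B C (a j).

Lemma prime_exponent_neq0 j : (j < size s)%N -> e j <> 0%Z.
Proof.
move=> j_lt e_eq0; have := abs_prime_exponent (a j) B_gt0 C_gt0 coBC.
by rewrite -/(e j) e_eq0 => /esym/eqP; rewrite -leqn0 leqNgt logn_gt0 mem_nth.
Qed.

Lemma prodR_prime_powers :
  prodR (size s) (fun j => powerRZ (INR (a j)) (e j)) = INR B / INR C.
Proof.
have sub_s d : (0 < d)%N -> (d %| B * C)%N -> {subset primes d <= s}.
  move=> d_gt0 d_dvd p; rewrite !mem_primes d_gt0 muln_gt0 B_gt0 C_gt0.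
  by case/and3P=> -> _ /dvdn_trans->.
rewrite (@prodR_ext _ _
          (fun j => INR (a j ^ logn (a j) B) / INR (a j ^ logn (a j) C))).
  rewrite prodR_div (prodR_nth_INR s (fun p => p ^ logn p B)%N).
  rewrite (prodR_nth_INR s (fun p => p ^ logn p C)%N) !prod_primes_logn ?primes_uniq //.
    exact: sub_s C_gt0 (dvdn_mull _ (dvdnn C)).
  exact: sub_s B_gt0 (dvdn_mulr _ (dvdnn B)).
move=> j j_lt; rewrite /e /prime_exponent powerRZ_sub_of_nat ?INR_expn //.
by apply/not_0_INR/eqP; rewrite -lt0n; apply: nth_primes_gt0.
Qed.

Lemma abs_prodR_exponents_factors :
  Rabs (prodR (size s) (fun j => IZR (e j)) * prodR (size s) (fun j => INR (a j)))
  = INR (prod_logn (B * C) * rad (B * C)).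
Proof.
rewrite Rabs_mult prodR_abs Rabs_pos_eq; last first.
  by rewrite (prodR_nth_INR s id); apply: pos_INR.
rewrite mult_INR (prodR_nth_INR s id); congr (_ * _).
rewrite (@prodR_ext _ _ (fun j => INR (logn (a j) (B * C)))).
  exact: (prodR_nth_INR s (fun p => logn p (B * C))).
by move=> j _; rewrite Rabs_Zabs -Zabs2Nat.id_abs -INR_IZR_INZ abs_prime_exponent.
Qed.

End PrimeFactorisation.

Definition coprime_ratio_bound (eps K : R) : Prop :=
  forall B C : nat, (0 < B)%N -> (0 < C)%N -> coprime B C -> INR B / INR C <> 1 ->
    K / Rpower (INR (prod_logn (B * C) * rad (B * C))) (1 + eps)
    <= Rabs (INR B / INR C - 1).

Lemma LangWaldschmidt_coprime_ratio :
  LangWaldschmidt -> forall eps, 0 < eps ->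
  exists K, 0 < K /\ coprime_ratio_bound eps K.
Proof.
move=> LW eps eps_gt0; have [K [K_gt0 LWK]] := LW eps eps_gt0.
exists K; split => // B C B_gt0 C_gt0 coBC ratio_neq1.
set s := primes (B * C).
set a := nth 0%N s.
set e := fun j => prime_exponent B C (a j).
have a_gt0 j : (j < size s)%coq_nat -> (0 < a j)%coq_nat.
  by move/ltP/nth_primes_gt0/ltP.
have e_neq0 j : (j < size s)%coq_nat -> e j <> 0%Z.
  by move/ltP/(prime_exponent_neq0 B_gt0 C_gt0 coBC).
have := LWK (size s) a e a_gt0 e_neq0.
rewrite prodR_prime_powers // abs_prodR_exponents_factors // => /(_ ratio_neq1).
have s_gt0 : (0 < size s)%N.
  rewrite lt0n; apply: contra_notN ratio_neq1 => /eqP s_eq0.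
  by rewrite -(prodR_prime_powers B_gt0 C_gt0) // -/s s_eq0.
have max_ge1 : 1 <= maxR (size s) (fun j => IZR (Z.abs (e j))).
  apply: Rle_trans (le_maxR _ _ _ s_gt0); apply: IZR_le.
  have := e_neq0 0%N (ltP s_gt0); lia.
have pow_gt0 : 0 < Rpower (INR (prod_logn (B * C) * rad (B * C))) (1 + eps).
  exact: exp_pos.
move/Rge_le; apply: Rle_trans; rewrite /Rdiv.
apply: Rmult_le_compat_r; first exact/Rlt_le/Rinv_0_lt_compat.
nra.
Qed.

Lemma ln_abs_nat_mul_le_twice_height {b c} : b <> 0%Z -> c <> 0%Z ->
  ln (INR (Z.abs_nat (b * c))) <= 2 * height b c.
Proof.
move=> b_neq0 c_neq0.
have le_height z : z <> 0%Z -> (Z.abs z <= Z.max (Z.abs b) (Z.abs c))%Z ->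
    ln (INR (Z.abs_nat z)) <= height b c.
  move=> z_neq0 z_le; apply: ln_le; first exact: INR_abs_nat_gt0.
  by rewrite INR_abs_nat Rabs_Zabs; apply: IZR_le.
rewrite Zabs2Nat.inj_mul mult_INR ln_mult; [|exact: INR_abs_nat_gt0..].
by have := le_height b b_neq0 ltac:(lia); have := le_height c c_neq0 ltac:(lia); lra.
Qed.

Lemma lambda1_le_coprime_ratio {eps K b c} :
  0 < K -> coprime_ratio_bound eps K ->
  Z.gcd b c = 1%Z -> b <> c -> Rabs (1 - IZR b / IZR c) < 1 ->
  lambda1 b c <= (1 + eps) * (ln (INR (prod_logn (Z.abs_nat (b * c)))) + N1 b c) - ln K.
Proof.
move=> K_gt0 LWK g1 b_neq_c near; set x := IZR b / IZR c in near *.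
have x_gt0 : 0 < x by have [? ?] := Rabs_def2 _ _ near; lra.
have c_neq0 : c <> 0%Z by move=> c0; move: x_gt0; rewrite /x c0 /Rdiv Rinv_0; lra.
have b_neq0 : b <> 0%Z by move=> b0; move: x_gt0; rewrite /x b0 /Rdiv Rmult_0_l; lra.
have x_neq1 : x <> 1.
  move=> x1; apply/b_neq_c/eq_IZR.
  have -> : IZR b = x * IZR c by rewrite /x; field; apply: not_0_IZR.
  by rewrite x1 Rmult_1_l.
have x_eq : x = INR (Z.abs_nat b) / INR (Z.abs_nat c).
  by rewrite !INR_abs_nat /Rdiv -Rabs_inv -Rabs_mult Rabs_pos_eq //; apply: Rlt_le.
have abs_gt0 z : z <> 0%Z -> (0 < Z.abs_nat z)%N by lia.
have := LWK _ _ (abs_gt0 _ b_neq0) (abs_gt0 _ c_neq0) (coprime_abs_nat g1).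
have -> : (Z.abs_nat b * Z.abs_nat c)%N = Z.abs_nat (b * c) by rewrite Zabs2Nat.inj_mul.
rewrite -x_eq Rabs_minus_sym => /(_ x_neq1) bound.
have := logplus_inv_le _ _ (Rdiv_lt_0_compat _ _ K_gt0 (exp_pos _)) bound near.
by rewrite /lambda1 /N1 -/x neg_ln_div_Rpower // ln_INR_mul ?prod_logn_gt0 ?rad_gt0.
Qed.

Lemma ln_prod_logn_le {eps k m} :
  0 < eps -> 2 * (1 + eps) < eps * INR k -> (0 < m)%N ->
  (1 + eps) * ln (INR (prod_logn m))
  <= (1 + eps) * ln (INR ((k ^ k) ^ (2 ^ k))) + eps / 2 * ln (INR m).
Proof.
move=> eps_gt0 k_large m_gt0.
have k_gt0 : (0 < k)%N by case: k k_large => //=; lra.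
have k_ge1 : 1 <= INR k by apply/(le_INR 1)/leP.
have G_gt0 : (0 < (k ^ k) ^ (2 ^ k))%N by rewrite !expn_gt0 k_gt0.
have Q_gt0 := prod_logn_gt0 m.
have k_lnQ : INR k * ln (INR (prod_logn m)) <= ln (INR ((k ^ k) ^ (2 ^ k))) + ln (INR m).
  rewrite -ln_pow; last exact: INR_gt0.
  rewrite -(ln_INR_mul G_gt0 m_gt0).
  apply: ln_le; first exact/pow_lt/INR_gt0.
  by rewrite -INR_expn; apply/le_INR/leP/prod_logn_exp_le.
have := ln_INR_ge0 Q_gt0; have := ln_INR_ge0 G_gt0; have := ln_INR_ge0 m_gt0.
nra.
Qed.

Theorem lemma5p2 :
  LangWaldschmidt ->
  forall eps : R, 0 < eps ->
  exists C' : R,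
    forall b c : Z,
      c <> 0%Z -> Z.gcd b c = 1%Z ->
      b <> 0%Z -> b <> c ->
      lambda1 b c < (1 + eps) * N1 b c + eps * height b c + C'.
Proof.
move=> LW eps eps_gt0.
have [K [K_gt0 LWK]] := LangWaldschmidt_coprime_ratio LW _ eps_gt0.
have [k k_large] : exists k, 2 * (1 + eps) < eps * INR k.
  have [k k_gt] := INR_unbounded (2 * (1 + eps) / eps); exists k.
  have -> : 2 * (1 + eps) = eps * (2 * (1 + eps) / eps) by field; lra.
  exact: Rmult_lt_compat_l.
have G_gt0 : (0 < (k ^ k) ^ (2 ^ k))%N by case: k {k_large} => [|k]; rewrite !expn_gt0.
exists ((1 + eps) * ln (INR ((k ^ k) ^ (2 ^ k))) + Rabs (ln K) + 1).
move=> b c c_neq0 g1 b_neq0 b_neq_c.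
have m_gt0 : (0 < Z.abs_nat (b * c))%N by lia.
have lnQ := ln_prod_logn_le eps_gt0 k_large m_gt0.
have lnm := ln_abs_nat_mul_le_twice_height b_neq0 c_neq0.
have := ln_INR_ge0 m_gt0; have := ln_INR_ge0 (prod_logn_gt0 (Z.abs_nat (b * c))).
have := ln_INR_ge0 G_gt0; have : 0 <= N1 b c by apply/ln_INR_ge0/rad_gt0.
have := Rabs_pos (ln K); have := Rle_abs (- ln K); rewrite Rabs_Ropp.
case: (Rle_lt_dec 1 (Rabs (1 - IZR b / IZR c))) => [far | near].
  by rewrite /lambda1 logplus_inv_ge1 //; nra.
have := lambda1_le_coprime_ratio K_gt0 LWK g1 b_neq_c near.
nra.
Qed.
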